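(* Let $\Omega$ be a finite set, $(H_i\mid i\in\Omega)$ finite abelian groups with $h_i=|H_i|\geqslant2$ for all $i$, $\mathbf{H}=\prod_{i\in\Omega}H_i$, $\mathbf{P}=(\Omega,\preccurlyeq_{\mathbf{P}})$ a poset. Let $\alpha\in\hat{\mathbf{H}}$ with $\langle\mathrm{supp}(\alpha)\rangle_{\overline{\mathbf{P}}}=D$, and let $X=(\Omega-D)\cup\min_{\mathbf{P}}(D)$. Then $\deg(F(\alpha))=|X|=|\Omega|-|D|+|\min_{\mathbf{P}}(D)|$, and the leading coefficient of $F(\alpha)$ equals $$(-1)^{|\min_{\mathbf{P}}(D)|}\Big(\prod_{i\in X-\max_{\mathbf{P}}(X)}h_i\Big)\Big(\prod_{i\in\max_{\mathbf{P}}(X)-\min_{\mathbf{P}}(D)}(h_i-1)\Big).$$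
   Context: $\hat{\mathbf{H}}$ is the character group of $\mathbf{H}$, identified with $\prod_i\hat{H_i}$ via $\alpha(\beta)=\prod_i\alpha_{(i)}(\beta_{(i)})$; $\mathrm{supp}$ of a codeword is the set of coordinates where it is not the identity. $\max_{\mathbf{P}}(B)$, $\min_{\mathbf{P}}(B)$ are the maximal, minimal elements of $B$. For a poset $\mathbf{Q}$ on $\Omega$, $\langle B\rangle_{\mathbf{Q}}$ is the down-closure of $B$ in $\mathbf{Q}$ and $\mathrm{wt}_{\mathbf{Q}}(\beta)=|\langle\mathrm{supp}(\beta)\rangle_{\mathbf{Q}}|$. $\overline{\mathbf{P}}$ is the dual poset. With $n=|\Omega|$, $F(\alpha)=\sum_{l=0}^{n}\big(\sum_{\beta\in\mathbf{H},\ \mathrm{wt}_{\mathbf{P}}(\beta)=l}\alpha(\beta)\big)x^l$. *)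

From HB Require Import structures.
From mathcomp Require Import all_boot all_order all_algebra all_field.
Set Implicit Arguments. Unset Strict Implicit. Unset Printing Implicit Defensive.
Import Order.TTheory GRing.Theory Num.Theory.
Local Open Scope ring_scope.

Section Defs.
Variables (I : finType) (H : I -> finZmodType).

Definition prodH := {dffun forall i, H i}.

Definition is_char (i : I) (f : H i -> algC) : Prop :=
  f 0 = 1 /\ forall x y, f (x + y) = f x * f y.

(* alpha in \hat H identified with prod_i \hat H_i: alpha(beta) = prod_i alpha_i(beta_i) *)
Definition char_eval (alpha : forall i, H i -> algC) (beta : prodH) : algC :=
  \prod_(i : I) alpha i (beta i).

Definition char_supp (alpha : forall i, H i -> algC) : {set I} :=
  [set i | [exists x : H i, alpha i x != 1]].

Definition supp (beta : prodH) : {set I} := [set i | beta i != 0].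

End Defs.

Section Poset.
Variable (I : finType).

Definition is_poset (le : rel I) : Prop :=
  reflexive le /\ antisymmetric le /\ transitive le.

Definition dual_rel (le : rel I) : rel I := fun x y => le y x.

Definition down_closure (le : rel I) (B : {set I}) : {set I} :=
  [set j | [exists i in B, le j i]].

Definition minP (le : rel I) (B : {set I}) : {set I} :=
  [set i in B | [forall j in B, le j i ==> (j == i)]].

Definition maxP (le : rel I) (B : {set I}) : {set I} :=
  [set i in B | [forall j in B, le i j ==> (j == i)]].
End Poset.

Definition wtP (I : finType) (H : I -> finZmodType) (le : rel I) (beta : prodH H) : nat :=
  #|down_closure le (supp beta)|.

Definition Fpoly (I : finType) (H : I -> finZmodType) (le : rel I)
    (alpha : forall i, H i -> algC) : {poly algC} :=
  \sum_(l < #|I|.+1)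
     (\sum_(beta : prodH H | wtP le beta == l) char_eval alpha beta) *: 'X^l.

From HB Require Import structures.
From mathcomp Require Import all_boot all_order all_algebra all_field.
Import Order.TTheory GRing.Theory Num.Theory.
Local Open Scope ring_scope.
Set Implicit Arguments. Unset Strict Implicit. Unset Printing Implicit Defensive.

(* Grouping the codewords b by the down-closure J of their support writes F(alpha)
   as the sum over J of g(J) x^|J|, where g(J) sums alpha over the b with
   <supp b> = J.  If some s in supp(alpha) lies strictly below a point of J,
   translating b in coordinate s by an x with alpha_s(x) <> 1 permutes these
   codewords and multiplies g(J) by alpha_s(x), so g(J) = 0.  Hence only subsets
   of X, the points not strictly above supp(alpha), contribute, and X is the only
   one of maximal size.  Finally g(X) factors over the coordinates (b nonzero on
   max X, arbitrary on the rest of X, zero outside X), each factor being a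
   character sum over H_i or over H_i minus 0. *)

Lemma size_poly_top (R : nzRingType) (p : {poly R}) n :
  p`_n != 0 -> (forall k, (n < k)%N -> p`_k = 0) -> size p = n.+1.
Proof.
move=> pn0 p_gt; apply/eqP; rewrite eqn_leq; apply/andP; split; first exact/leq_sizeP.
by rewrite ltnNge; apply: contra pn0 => /leq_sizeP ->.
Qed.

Lemma sum_eq0_scaled_by_perm (T : finType) (R : idomainType) (P : pred T)
    (w : T -> R) (sh : T -> T) (c : R) :
  injective sh -> (forall b, P (sh b) = P b) -> (forall b, w (sh b) = c * w b) ->
  c != 1 -> \sum_(b | P b) w b = 0.
Proof.
move=> sh_inj P_sh w_sh c_neq1; set s := \sum_(b | P b) w b.
have s_c : s = c * s.
  rewrite [LHS](reindex_inj sh_inj) mulr_sumr.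
  by apply: eq_big => b; [exact: P_sh | move=> _; exact: w_sh].
have : (1 - c) * s == 0 by rewrite mulrBl mul1r -s_c subrr.
by rewrite mulf_eq0 subr_eq0 eq_sym (negbTE c_neq1) => /eqP.
Qed.

Lemma sum_char (G : finZmodType) (R : idomainType) (f : G -> R) :
  {morph f : x y / x + y >-> x * y} ->
  \sum_x f x = if [exists x, f x != 1] then 0 else #|G|%:R.
Proof.
move=> fD; case: existsP => [[x fx_neq1]|f1].
  by apply: (sum_eq0_scaled_by_perm (c := f x) (addrI x)) => // y; rewrite fD.
rewrite (eq_bigr (fun=> 1)) ?sumr_const // => x _.
by apply/eqP/negPn/negP => fx_neq1; apply: f1; exists x.
Qed.

Lemma sum_prod_dffun (R : comPzSemiRingType) (I : finType) (T_ : I -> finType)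
    (Q : forall i, pred (T_ i)) (f : forall i, T_ i -> R) :
  \sum_(b : {dffun forall i, T_ i} | [forall i, Q i (b i)]) \prod_i f i (b i) =
  \prod_i \sum_(x | Q i x) f i x.
Proof.
pose P_ i := [ffun x : T_ i => if Q i x then f i x else 0].
transitivity (\sum_(t : fprod T_) \prod_(i in I) P_ i (t i)).
  rewrite big_mkcond (reindex (@fprod_of_dffun I T_)); last first.
    exact/onW_bij/fprod_of_dffun_bij.
  apply: eq_bigr => b _; case: forallP => [Qb|/forallP].
    by apply: eq_bigr => i _; rewrite ffunE fprodE Qb.
  rewrite negb_forall => /existsP[i Qbi].
  by rewrite (bigD1 i) //= ffunE fprodE (negbTE Qbi) mul0r.
rewrite big_fprod -(bigA_distr_big_dep _ (fun i => untag 0 (P_ i))).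
apply: eq_bigr => i _; rewrite [RHS]big_mkcond.
rewrite (eq_bigr (P_ i)) => [|x _]; last by rewrite ffunE.
by rewrite (big_tag (fun i => P_ i)).
Qed.

Section Poset.
Variables (I : finType) (le : rel I).
Hypothesis hle : is_poset le.
Let le_refl : reflexive le := hle.1.
Let le_anti : antisymmetric le := hle.2.1.
Let le_trans : transitive le := hle.2.2.

Lemma exists_maxP_ge (A : {set I}) j : j \in A -> exists2 u, u \in maxP le A & le j u.
Proof.
move=> jA; pose below u := [set v | le v u].
pose above_j := [pred u | (u \in A) && le j u].
have above_jj : above_j j by rewrite /= jA le_refl.
have [u /andP[uA lju] u_max] := arg_maxnP (fun u => #|below u|) above_jj.
exists u => //; rewrite inE uA; apply/forall_inP => w wA; apply/implyP => luw.
have below_uw : below u \subset below w.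
  by apply/subsetP => v; rewrite !inE => lvu; apply: le_trans lvu luw.
have /eqP below_eq : below u == below w.
  by rewrite eqEcard below_uw; apply: u_max; rewrite /= wA (le_trans lju luw).
have : w \in below u by rewrite below_eq inE le_refl.
by rewrite inE => lwu; apply/eqP/le_anti; rewrite lwu luw.
Qed.

Lemma down_closure_eq (A B : {set I}) :
  (forall i j, le i j -> j \in B -> i \in B) ->
  (down_closure le A == B) = (maxP le B \subset A) && (A \subset B).
Proof.
move=> B_down; apply/eqP/andP => [<-|[maxB_A AB]].
  split; apply/subsetP => i; rewrite !inE.
    case/andP=> /exists_inP[u uA liu] /forall_inP/(_ u) u_max.
    have uA' : u \in down_closure le A by rewrite inE; apply/exists_inP; exists u.
    by move: (u_max uA'); rewrite liu => /eqP <-.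
  by move=> iA; apply/exists_inP; exists i.
apply/setP => j; rewrite inE; apply/exists_inP/idP => [[u uA lju] | jB].
  exact: B_down lju (subsetP AB u uA).
by have [u /(subsetP maxB_A) uA lju] := exists_maxP_ge jB; exists u.
Qed.

Lemma down_closureD1 (A : {set I}) s u :
  u \in A :\ s -> le s u -> down_closure le (A :\ s) = down_closure le A.
Proof.
move=> uAs lsu; apply/setP => j; rewrite [LHS]inE [RHS]inE.
apply/exists_inP/exists_inP => [[v /setD1P[_ vA] ljv] | [v vA ljv]]; first by exists v.
have [vs|nvs] := eqVneq v s; last by exists v; rewrite // !inE nvs.
by exists u => //; apply: le_trans lsu; rewrite -vs.
Qed.

Lemma down_closure_eq_offD1 (A B : {set I}) s t :
  A :\ s = B :\ s -> t \in down_closure le A -> le s t -> s != t ->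
  down_closure le B = down_closure le A.
Proof.
move=> eqAB; rewrite inE => /exists_inP[u uA ltu] lst nst.
have lsu := le_trans lst ltu.
have uAs : u \in A :\ s.
  rewrite !inE uA andbT; apply: contraNneq nst => us.
  by apply/eqP/le_anti; rewrite lst -us ltu.
by rewrite -(down_closureD1 uAs lsu) eqAB (down_closureD1 _ lsu) // -eqAB.
Qed.

Variable S : {set I}.
Local Notation D := (down_closure (dual_rel le) S).
Local Notation X := (~: D :|: minP le D).

Lemma mem_D i : (i \in D) = [exists s in S, le s i].
Proof. by rewrite inE. Qed.

Lemma mem_X i : (i \in X) = [forall s in S, le s i ==> (s == i)].
Proof.
rewrite in_setU in_setC [i \in minP _ _]inE mem_D; apply/idP/forall_inP => [|iX].
  case/orP => [/exists_inP iD | /andP[_ /forall_inP imin]] s sS; apply/implyP => lsi.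
    by case: iD; exists s.
  by apply: implyP lsi; apply: imin; rewrite mem_D; apply/exists_inP; exists s.
case: exists_inP => //= -[s sS lsi]; apply/forall_inP => j.
rewrite mem_D => /exists_inP[s' s'S ls'j]; apply/implyP => lji.
have /eqP es'i := implyP (iX s' s'S) (le_trans ls'j lji).
by apply/eqP/le_anti; rewrite lji -es'i ls'j.
Qed.

Lemma X_down i j : le i j -> j \in X -> i \in X.
Proof.
rewrite !mem_X => lij /forall_inP jX; apply/forall_inP => s sS; apply/implyP => lsi.
have /eqP esj := implyP (jX s sS) (le_trans lsi lij).
by apply/eqP/le_anti; rewrite lsi esj.
Qed.

Lemma minP_up_closure : minP le D = S :&: X.
Proof.
apply/setP => i; rewrite in_setI; apply/idP/andP => [imin | [iS iX]].
  have iX : i \in X by rewrite inE imin orbT.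
  split=> //; have := imin; rewrite inE mem_D => /andP[/exists_inP[s sS lsi] _].
  by move: iX; rewrite mem_X => /forall_inP/(_ s sS); rewrite lsi => /eqP <-.
move: iX; rewrite in_setU in_setC mem_D.
by have -> : [exists s in S, le s i] by apply/exists_inP; exists i.
Qed.

Lemma setIX_subset_maxP : S :&: X \subset maxP le X.
Proof.
apply/subsetP => i /setIP[iS iX]; rewrite inE iX; apply/forall_inP => j.
by rewrite mem_X eq_sym => /forall_inP/(_ i iS).
Qed.

Lemma card_X : #|X| = (#|I| - #|D| + #|minP le D|)%N.
Proof.
have minD_D : minP le D \subset D by apply/subsetP => i; rewrite inE => /andP[].
rewrite cardsU -(cardsC D) addKn; have -> : ~: D :&: minP le D = set0.
  by apply/eqP; rewrite setIC -setDE setD_eq0.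
by rewrite cards0 subn0.
Qed.

End Poset.

Section Codewords.
Variables (I : finType) (H : I -> finZmodType) (le : rel I).
Hypothesis hle : is_poset le.
Variable alpha : forall i, H i -> algC.
(* [Set Implicit Arguments] would otherwise make the index of [alpha] implicit. *)
Arguments alpha : clear implicits.
Hypothesis halpha : forall i, is_char (alpha i).

Definition char_sum_down_closure (J : {set I}) : algC :=
  \sum_(b : prodH H | down_closure le (supp b) == J) char_eval alpha b.

Lemma coef_Fpoly k : (Fpoly le alpha)`_k = \sum_(J : {set I} | #|J| == k) char_sum_down_closure J.
Proof.
rewrite coef_sumMXn; transitivity (\sum_(b | wtP le b == k) char_eval alpha b).
  have [k_le | k_gt] := ltnP k #|I|.+1.
    by rewrite (big_pred1 (Ordinal k_le)) // => l; rewrite -val_eqE.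
  rewrite !big_pred0 // => x; apply/negbTE; rewrite neq_ltn.
    by rewrite (leq_ltn_trans (max_card _) k_gt).
  by rewrite (leq_trans (ltn_ord x) k_gt).
rewrite (partition_big (fun b => down_closure le (supp b)) (fun J => #|J| == k))
  => [|b /eqP <-] //.
apply: eq_bigr => J /eqP cardJ; apply: eq_bigl => b.
have [dcJ | _] := eqVneq (down_closure le (supp b)) J; last by rewrite andbF.
by rewrite /wtP dcJ cardJ eqxx.
Qed.

Lemma char_sum_down_closure_eq0 (J : {set I}) s t :
  s \in char_supp alpha -> t \in J -> le s t -> s != t -> char_sum_down_closure J = 0.
Proof.
rewrite inE => /existsP[x alpha_x] tJ lst nst.
pose d := dfwith (fun i => 0 : H i) x.
pose shift (b : prodH H) : prodH H := [ffun i => b i + d i].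
have d_in : d s = x by rewrite /d dfwith_in.
have d_out i : i != s -> d i = 0 by move=> nis; rewrite /d dfwith_out // eq_sym.
have supp_shift b : supp (shift b) :\ s = supp b :\ s.
  apply/setP => i; rewrite !inE ffunE.
  by case: eqVneq => [// | nis]; rewrite d_out ?addr0.
apply: (sum_eq0_scaled_by_perm (sh := shift) (c := alpha s x)) => // [b1 b2 | b | b].
- by move/ffunP => eq12; apply/ffunP => i; move: (eq12 i); rewrite !ffunE => /addIr.
- apply/eqP/eqP => dcJ; rewrite -dcJ.
    by apply: (down_closure_eq_offD1 hle (supp_shift b) _ lst nst); rewrite dcJ.
  by apply: (down_closure_eq_offD1 hle (esym (supp_shift b)) _ lst nst); rewrite dcJ.
rewrite /char_eval (bigD1 s) // [in RHS](bigD1 s) //= ffunE (halpha s).2 d_in.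
rewrite -mulrA mulrCA; congr (_ * (_ * _)); apply: eq_bigr => i nis.
by rewrite ffunE d_out ?addr0.
Qed.

Local Notation S := (char_supp alpha).
Local Notation D := (down_closure (dual_rel le) S).
Local Notation X := (~: D :|: minP le D).

Lemma char_sum_down_closure_X :
  char_sum_down_closure X =
    (-1) ^+ #|minP le D|
    * (\prod_(i in X :\: maxP le X) (#|H i|)%:R)
    * (\prod_(i in maxP le X :\: minP le D) ((#|H i|)%:R - 1)).
Proof.
set M := maxP le X.
pose Q i (y : H i) := if i \in M then y != 0 else (i \in X) || (y == 0).
have dcX b : (down_closure le (supp b) == X) = [forall i, Q i (b i)].
  rewrite (down_closure_eq hle); last exact: X_down.
  apply/andP/forallP => [[MA AX] i | Qb]; rewrite /Q.
    case: ifP => iM; first by have := subsetP MA i iM; rewrite inE.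
    case: (boolP (i \in X)) => //= iX; apply: contraNT iX => bi.
    by apply: (subsetP AX); rewrite inE.
  split; apply/subsetP => i; have := Qb i; rewrite /Q.
    by move=> + iM; rewrite iM inE.
  rewrite [i \in supp b]inE; case: ifP => [iM _ _ | _ /orP[// | /eqP ->]]; last by rewrite eqxx.
  by move: iM; rewrite inE => /andP[].
have M_X : M \subset X by apply/subsetP => i; rewrite inE => /andP[].
have SX_M : S :&: X \subset M := setIX_subset_maxP hle S.
rewrite /char_sum_down_closure (eq_bigl _ _ dcX) /char_eval sum_prod_dffun -prodr_const.
rewrite !(big_mkcond (fun i => i \in _)) -!big_split /=; apply: eq_bigr => i _.
have sum_alpha : \sum_y alpha i y = if i \in S then 0 else (#|H i|)%:R.
  by rewrite inE; apply: sum_char; apply: (halpha i).2.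
have minD_i : (i \in minP le D) = (i \in S) && (i \in X).
  by rewrite -in_setI -(minP_up_closure hle).
rewrite !in_setD minD_i /Q.
case iM : (i \in M).
  have iX := subsetP M_X i iM.
  have -> : \sum_(y | y != 0) alpha i y = \sum_y alpha i y - 1.
    by rewrite [in RHS](bigD1 0) //= (halpha i).1 addrC addrK.
  by rewrite sum_alpha iX; case: (i \in S); rewrite /= ?mul1r ?mulr1 ?sub0r.
have -> : (i \in S) && (i \in X) = false.
  by apply: contraFF iM => iSX; apply: (subsetP SX_M); rewrite inE.
case iX : (i \in X) => /=; rewrite !mul1r ?mulr1.
  by rewrite sum_alpha; case: ifP => // iS; case/negP: iM; apply: (subsetP SX_M); rewrite inE iS.
by rewrite big_pred1_eq (halpha i).1.
Qed.

End Codewords.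

Unset Implicit Arguments. Set Strict Implicit.

Theorem proposition2p2 (I : finType) (H : I -> finZmodType)
  (hH : forall i, (1 < #|H i|)%N)
  (le : rel I) (hle : is_poset le)
  (alpha : forall i, H i -> algC) (halpha : forall i, is_char (alpha i)) :
  let D := down_closure (dual_rel le) (char_supp alpha) in
  let X := (~: D) :|: minP le D in
  (size (Fpoly le alpha)).-1 = #|X| /\
  #|X| = (#|I| - #|D| + #|minP le D|)%N /\
  lead_coef (Fpoly le alpha) =
    (-1) ^+ #|minP le D|
    * (\prod_(i in X :\: maxP le X) (#|H i|)%:R)
    * (\prod_(i in maxP le X :\: minP le D) ((#|H i|)%:R - 1)).
Proof.
move=> D X; pose g := char_sum_down_closure le alpha.
have g_neq0_sub J : g J != 0 -> J \subset X.
  move=> gJ; apply/subsetP => t tJ; rewrite (mem_X hle); apply/forall_inP => s sS.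
  apply/implyP => lst; apply: contraR gJ => nst.
  exact/eqP/(char_sum_down_closure_eq0 hle halpha sS tJ lst nst).
have g_eq0 (J : {set I}) : (#|X| <= #|J|)%N -> J != X -> g J = 0.
  by move=> XJ; apply: contraNeq => /g_neq0_sub JX; rewrite eqEcard JX XJ.
have gX := char_sum_down_closure_X hle halpha.
have gX_neq0 : g X != 0.
  rewrite /g gX !mulf_neq0 ?expf_neq0 ?oppr_eq0 ?oner_eq0 //; apply/prodf_neq0 => i _.
    by rewrite pnatr_eq0 -lt0n ltnW.
  by rewrite subr_eq0 pnatr_eq1 neq_ltn hH orbT.
have coef_X : (Fpoly le alpha)`_#|X| = g X.
  rewrite coef_Fpoly (bigD1 X) //= big1 ?addr0 // => J /andP[/eqP cardJ JX].
  by apply: g_eq0; rewrite ?cardJ.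
have size_F : size (Fpoly le alpha) = #|X|.+1.
  apply: size_poly_top => [|k Xk]; first by rewrite coef_X.
  rewrite coef_Fpoly big1 // => J /eqP cardJ; apply: g_eq0; first by rewrite cardJ ltnW.
  by apply: contraTneq Xk => JX; rewrite -cardJ JX ltnn.
split; first by rewrite size_F.
split; first exact: card_X.
by rewrite lead_coefE size_F coef_X /g gX.
Qed.
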